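(* Let $\alpha\in\mathbb{N}_0$. For every $y\in C^{(2\alpha+4)}[0,\infty)$, $$(-1)^{\alpha+1}e^x x\,D_x^{\alpha+2}\big\{e^{-x}D_x^{\alpha+2}[x^{\alpha+1}y(x)]\big\}=\sum_{i=1}^{2\alpha+4}d_i^{\alpha}(x)\,D_x^i y(x),$$ where $$d_i^{\alpha}(x)=\sum_{j=\max(1,\,i-\alpha-2)}^{\min(i,\alpha+2)}(-1)^{i+j+1}\binom{\alpha+1}{j-1}\binom{\alpha+2}{i-j}(i+1)_{\alpha+2-j}\,x^j.$$
   Context: $D_x^i$ denotes the $i$-fold derivative in $x$; $(a)_k=a(a+1)\cdots(a+k-1)$ is the Pochhammer symbol. *)

From Stdlib Require Import Reals List.
Open Scope R_scope.

Definition deriv_nonneg (f : R -> R) (x l : R) : Prop :=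
  forall eps, 0 < eps -> exists delta, 0 < delta /\
    forall h, h <> 0 -> Rabs h < delta -> 0 <= x + h ->
      Rabs ((f (x + h) - f x) / h - l) < eps.

Definition cont_nonneg (f : R -> R) : Prop :=
  forall x, 0 <= x -> forall eps, 0 < eps -> exists delta, 0 < delta /\
    forall z, 0 <= z -> Rabs (z - x) < delta -> Rabs (f z - f x) < eps.

Definition is_derivs (n : nat) (f : R -> R) (F : nat -> R -> R) : Prop :=
  (forall x, 0 <= x -> F O x = f x) /\
  (forall k, (k < n)%nat -> forall x, 0 <= x -> deriv_nonneg (F k) x (F (S k) x)).

Definition is_Cn_derivs (n : nat) (f : R -> R) (F : nat -> R -> R) : Prop :=
  is_derivs n f F /\ cont_nonneg (F n).

Fixpoint poch (a : R) (k : nat) : R :=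
  match k with
  | O => 1
  | S k' => poch a k' * (a + INR k')
  end.

(* sum_{j=m}^{n} f j  (empty if n < m). *)
Definition sum_range (m n : nat) (f : nat -> R) : R :=
  fold_right (fun j acc => f j + acc) 0 (seq m (S n - m)).

Definition d_coef (alpha i : nat) (x : R) : R :=
  sum_range (Nat.max 1 (i - alpha - 2)) (Nat.min i (alpha + 2))
    (fun j => (-1) ^ (i + j + 1) * Binomial.C (alpha + 1) (j - 1)
              * Binomial.C (alpha + 2) (i - j)
              * poch (INR (i + 1)) (alpha + 2 - j) * x ^ j).

From Stdlib Require Import Reals List Factorial Lra Lia.
Open Scope R_scope.

(* Write A = alpha + 2.  By the Leibniz rule, for n >= alpha + 1 the n-th derivative of
   x^(alpha+1) y(x) has only alpha + 2 nonzero terms, and C(n, r) (alpha+1)(alpha)...(alpha+2-r)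
   turns into C(alpha+1, j) (n-alpha+j)_(alpha+1-j), a Pochhammer symbol; likewise
   D^A (e^-x g) = e^-x sum_s C(A, s) (-1)^(A-s) g^(s).  After multiplying by
   (-1)^(alpha+1) e^x x one gets a double sum over 1 <= j <= A, 0 <= s <= A of multiples of
   x^j y^(j+s), and summing it along the anti-diagonals i = j + s gives the coefficients
   d_i^alpha.  The derivatives in the statement are arbitrary families of one-sided
   derivatives on [0, oo), which uniqueness of such derivatives identifies with the
   Leibniz expansions. *)

Definition nonneg_increment (x h : R) : Prop := h <> 0 /\ 0 <= x + h.

Lemma deriv_nonneg_limit1_in f x l :
  deriv_nonneg f x l <->
  limit1_in (fun h => (f (x + h) - f x) / h) (nonneg_increment x) l 0.
Proof.
  unfold deriv_nonneg, limit1_in, limit_in, nonneg_increment; simpl; unfold R_dist.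
  split; intros H eps Heps; destruct (H eps Heps) as [d [Hd Hf]];
    exists d; split; auto; intros h.
  - intros [[h0 hx] hd]; rewrite Rminus_0_r in hd; auto.
  - intros h0 hd hx; apply Hf; rewrite Rminus_0_r; auto.
Qed.

Lemma deriv_nonneg_const c x : deriv_nonneg (fun _ => c) x 0.
Proof.
  apply deriv_nonneg_limit1_in.
  apply limit1_ext with (fun _ => 0); [|exact (limit_free (fun _ => 0) _ 0 0)].
  intros h [h0 _]; field; auto.
Qed.

Lemma deriv_nonneg_plus f g x lf lg :
  deriv_nonneg f x lf -> deriv_nonneg g x lg ->
  deriv_nonneg (fun z => f z + g z) x (lf + lg).
Proof.
  rewrite !deriv_nonneg_limit1_in; intros Hf Hg.
  eapply limit1_ext; [|exact (limit_plus _ _ _ _ _ _ Hf Hg)].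
  intros h [h0 _]; simpl; field; auto.
Qed.

Lemma deriv_nonneg_mult f g x lf lg :
  deriv_nonneg f x lf -> deriv_nonneg g x lg ->
  deriv_nonneg (fun z => f z * g z) x (lf * g x + f x * lg).
Proof.
  rewrite !deriv_nonneg_limit1_in; intros Hf Hg.
  (* [f (x + h) = f x + h * q(h)] with [q] the difference quotient, so [f] is continuous. *)
  assert (Hcont : limit1_in (fun h => f x + h * ((f (x + h) - f x) / h))
                    (nonneg_increment x) (f x + 0 * lf) 0).
  { apply limit_plus; [exact (limit_free (fun _ => f x) _ 0 0)|].
    apply limit_mul; [apply lim_x|exact Hf]. }
  replace (lf * g x + f x * lg) with (lf * g x + (f x + 0 * lf) * lg) by ring.
  eapply limit1_ext;
    [|exact (limit_plus _ _ _ _ _ _ (limit_mul _ _ _ _ _ _ Hf (limit_free (fun _ => g x) _ 0 0))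
                                    (limit_mul _ _ _ _ _ _ Hcont Hg))].
  intros h [h0 _]; simpl; field; auto.
Qed.

Lemma deriv_nonneg_of_derivable_pt_lim f x l :
  derivable_pt_lim f x l -> deriv_nonneg f x l.
Proof.
  intros H eps Heps; destruct (H eps Heps) as [d Hd].
  exists d; split; [apply cond_pos|]; auto.
Qed.

Lemma deriv_nonneg_unique f x l1 l2 :
  0 <= x -> deriv_nonneg f x l1 -> deriv_nonneg f x l2 -> l1 = l2.
Proof.
  rewrite !deriv_nonneg_limit1_in; intros Hx.
  apply single_limit.
  intros e He; exists (e / 2); unfold nonneg_increment, R_dist.
  rewrite Rminus_0_r, Rabs_pos_eq; lra.
Qed.

Lemma deriv_nonneg_ext f g x l :
  (forall z, 0 <= z -> f z = g z) -> 0 <= x ->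
  deriv_nonneg f x l -> deriv_nonneg g x l.
Proof.
  intros E Hx H eps Heps; destruct (H eps Heps) as [d [Hd Hf]].
  exists d; split; auto; intros h h0 hd hx; rewrite <- !E; auto.
Qed.
Fixpoint sum_lt (n : nat) (f : nat -> R) : R :=
  match n with O => 0 | S n' => sum_lt n' f + f n' end.

Lemma sum_lt_ext n f g :
  (forall i, (i < n)%nat -> f i = g i) -> sum_lt n f = sum_lt n g.
Proof. induction n; simpl; intros E; auto; rewrite IHn, E; auto. Qed.

Lemma sum_lt_eq0 n f : (forall i, (i < n)%nat -> f i = 0) -> sum_lt n f = 0.
Proof. induction n; simpl; intros E; auto; rewrite IHn, E; auto; ring. Qed.

Lemma sum_lt_plus n f g : sum_lt n (fun i => f i + g i) = sum_lt n f + sum_lt n g.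
Proof. induction n; simpl; [ring|]; rewrite IHn; ring. Qed.

Lemma sum_lt_mult_l n c f : sum_lt n (fun i => c * f i) = c * sum_lt n f.
Proof. induction n; simpl; [ring|]; rewrite IHn; ring. Qed.

Lemma sum_lt_succ_l n f : sum_lt (S n) f = f O + sum_lt n (fun i => f (S i)).
Proof. induction n; simpl in *; [ring|]; rewrite IHn; ring. Qed.

Lemma sum_lt_add m k f :
  sum_lt (m + k) f = sum_lt m f + sum_lt k (fun i => f (m + i)%nat).
Proof.
  induction k; simpl; [rewrite Nat.add_0_r; ring|].
  rewrite Nat.add_succ_r; simpl; rewrite IHk; ring.
Qed.

Lemma sum_lt_trunc n m f :
  (m <= n)%nat -> (forall i, (m <= i < n)%nat -> f i = 0) -> sum_lt n f = sum_lt m f.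
Proof.
  intros Hmn E; replace n with (m + (n - m))%nat by lia.
  rewrite sum_lt_add, (sum_lt_eq0 (n - m)); [ring|].
  intros i Hi; apply E; lia.
Qed.

Lemma sum_lt_rev n f : sum_lt n f = sum_lt n (fun i => f (n - 1 - i)%nat).
Proof.
  induction n; auto.
  change (sum_lt n f + f n = sum_lt (S n) (fun i => f (S n - 1 - i)%nat)).
  rewrite sum_lt_succ_l, IHn, Rplus_comm; f_equal; [f_equal; lia|].
  apply sum_lt_ext; intros i Hi; f_equal; lia.
Qed.

Lemma sum_lt_swap n m f :
  sum_lt n (fun i => sum_lt m (f i)) = sum_lt m (fun j => sum_lt n (fun i => f i j)).
Proof.
  induction n; simpl; [symmetry; apply sum_lt_eq0; auto|].
  rewrite IHn, sum_lt_plus; auto.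
Qed.

Lemma deriv_nonneg_sum_lt n f f' x :
  (forall i, (i < n)%nat -> deriv_nonneg (f i) x (f' i)) ->
  deriv_nonneg (fun z => sum_lt n (fun i => f i z)) x (sum_lt n f').
Proof.
  induction n; simpl; intros E; [apply deriv_nonneg_const|].
  apply deriv_nonneg_plus; auto.
Qed.

Lemma sum_range_sum_lt m n f :
  sum_range m n f = sum_lt (S n - m) (fun t => f (m + t)%nat).
Proof.
  unfold sum_range; generalize (S n - m)%nat as k; intros k; revert m.
  induction k; intros m; auto.
  simpl seq; simpl fold_right; rewrite IHk, sum_lt_succ_l, Nat.add_0_r.
  f_equal; apply sum_lt_ext; intros; f_equal; lia.
Qed.

Lemma sum_range_ext m n f g :
  (forall i, (m <= i <= n)%nat -> f i = g i) -> sum_range m n f = sum_range m n g.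
Proof.
  intros E; rewrite !sum_range_sum_lt; apply sum_lt_ext; intros; apply E; lia.
Qed.

Lemma sum_range_mult_r m n f c :
  sum_range m n (fun i => f i * c) = sum_range m n f * c.
Proof.
  rewrite !sum_range_sum_lt, Rmult_comm, <- sum_lt_mult_l.
  apply sum_lt_ext; intros; ring.
Qed.

Lemma sum_range_shift m n k f :
  sum_range m n f = sum_range (k + m) (k + n) (fun i => f (i - k)%nat).
Proof.
  rewrite !sum_range_sum_lt; replace (S (k + n) - (k + m))%nat with (S n - m)%nat by lia.
  apply sum_lt_ext; intros; f_equal; lia.
Qed.

Lemma sum_range_indicator m n N f : (n < N)%nat ->
  sum_range m n f = sum_lt N (fun t => if ((m <=? t)%nat && (t <=? n)%nat)%bool then f t else 0).
Proof.
  intros HN; rewrite sum_range_sum_lt.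
  destruct (Nat.le_gt_cases m n) as [Hmn|Hmn].
  - replace N with (m + (N - m))%nat by lia.
    rewrite sum_lt_add, (sum_lt_eq0 m), Rplus_0_l.
    2:{ intros i Hi; destruct (Nat.leb_spec m i); [lia|reflexivity]. }
    rewrite (sum_lt_trunc (N - m) (S n - m)); [|lia|].
    + apply sum_lt_ext; intros i Hi.
      destruct (Nat.leb_spec m (m + i)), (Nat.leb_spec (m + i) n); try lia; reflexivity.
    + intros i Hi; destruct (Nat.leb_spec (m + i) n); [lia|].
      rewrite Bool.andb_false_r; reflexivity.
  - replace (S n - m)%nat with O by lia; symmetry; apply sum_lt_eq0; intros i Hi.
    destruct (Nat.leb_spec m i), (Nat.leb_spec i n); try lia; reflexivity.
Qed.

Lemma sum_range_diagonal a b q (f : nat -> nat -> R) :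
  sum_range a b (fun j => sum_range 0 q (f j))
  = sum_range a (b + q)
      (fun i => sum_range (Nat.max a (i - q)) (Nat.min i b) (fun j => f j (i - j)%nat)).
Proof.
  set (N := S (b + q)).
  rewrite (sum_range_indicator a b N), (sum_range_indicator a (b + q) N) by lia.
  transitivity (sum_lt N (fun j => sum_lt N (fun i =>
    if ((a <=? j) && (j <=? b) && (j <=? i) && (i <=? j + q))%nat%bool
    then f j (i - j)%nat else 0))).
  - apply sum_lt_ext; intros j _.
    destruct (Nat.leb_spec a j), (Nat.leb_spec j b); cbn [andb];
      try (symmetry; apply sum_lt_eq0; auto).
    rewrite (sum_range_shift 0 q j), Nat.add_0_r, (sum_range_indicator j (j + q) N) by lia.
    reflexivity.
  - rewrite sum_lt_swap; apply sum_lt_ext; intros i _.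
    destruct (Nat.leb_spec a i), (Nat.leb_spec i (b + q)); cbn [andb];
      [rewrite (sum_range_indicator _ _ N) by lia; apply sum_lt_ext
      |apply sum_lt_eq0 ..]; intros j _;
      destruct (Nat.leb_spec a j), (Nat.leb_spec j b), (Nat.leb_spec j i),
        (Nat.leb_spec i (j + q)), (Nat.leb_spec (Nat.max a (i - q)) j),
        (Nat.leb_spec j (Nat.min i b)); cbn [andb]; try reflexivity; lia.
Qed.

Lemma is_derivs_unique m f F F' : is_derivs m f F -> is_derivs m f F' ->
  forall k, (k <= m)%nat -> forall x, 0 <= x -> F k x = F' k x.
Proof.
  intros [F0 dF] [F'0 dF']; induction k; intros Hk x Hx.
  - rewrite F0, F'0; auto.
  - apply (deriv_nonneg_unique (F k) x _ _ Hx); [apply dF; auto; lia|].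
    apply (deriv_nonneg_ext (F' k) (F k) x _ (fun z Hz => eq_sym (IHk ltac:(lia) z Hz)) Hx).
    apply dF'; auto; lia.
Qed.

Lemma is_derivs_ext m f g F :
  (forall z, 0 <= z -> f z = g z) -> is_derivs m f F -> is_derivs m g F.
Proof. intros E [F0 dF]; split; auto; intros x Hx; rewrite <- E; auto. Qed.

Lemma is_derivs_le m k f F : (k <= m)%nat -> is_derivs m f F -> is_derivs k f F.
Proof. intros Hk [F0 dF]; split; auto; intros j Hj; apply dF; lia. Qed.

Lemma is_derivs_shift m k f F : (k <= m)%nat -> is_derivs m f F ->
  is_derivs (m - k) (F k) (fun j => F (k + j)%nat).
Proof.
  intros Hk [F0 dF]; split; [intros x _; rewrite Nat.add_0_r; auto|].
  intros j Hj x Hx; rewrite Nat.add_succ_r; apply dF; auto; lia.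
Qed.

Lemma C_n_0 n : C n 0 = 1.
Proof.
  unfold C; rewrite Nat.sub_0_r; simpl (Factorial.fact 0); simpl INR.
  field; apply INR_fact_neq_0.
Qed.

Lemma C_n_n n : C n n = 1.
Proof. rewrite pascal_step1, Nat.sub_diag by lia; apply C_n_0. Qed.

Definition leibniz (P F : nat -> R -> R) (k : nat) (x : R) : R :=
  sum_lt (S k) (fun l => C k l * P l x * F (k - l)%nat x).

Lemma leibniz_succ P F k x :
  sum_lt (S k) (fun l => C k l * (P (S l) x * F (k - l)%nat x + P l x * F (S (k - l)) x))
  = leibniz P F (S k) x.
Proof.
  unfold leibniz; set (g l := P (S l) x * F (k - l)%nat x).
  assert (Hlow : sum_lt (S k) (fun l => C k l * P l x * F (S (k - l)) x)
                 = P O x * F (S k) x + sum_lt k (fun l => C k (S l) * g l)).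
  { rewrite sum_lt_succ_l, C_n_0, Nat.sub_0_r; f_equal; [ring|].
    apply sum_lt_ext; intros l Hl; unfold g; replace (S (k - S l)) with (k - l)%nat by lia; ring. }
  assert (Hhigh : sum_lt (S k) (fun l => C (S k) (S l) * P (S l) x * F (S k - S l)%nat x)
                  = sum_lt (S k) (fun l => C k l * g l) + sum_lt k (fun l => C k (S l) * g l)).
  (* [C k (S k)] is not 0 (truncated subtraction), so the top term is split off
     before Pascal's rule is applied. *)
  { simpl sum_lt at 1 2; rewrite !C_n_n.
    rewrite (sum_lt_ext k _ (fun l => C k l * g l + C k (S l) * g l)), sum_lt_plus;
      [unfold g; ring|].
    intros l Hl; rewrite <- pascal by lia; unfold g; ring. }
  rewrite (sum_lt_ext (S k) _ (fun l => C k l * g l + C k l * P l x * F (S (k - l)) x))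
    by (intros; unfold g; ring).
  rewrite sum_lt_plus, Hlow, (sum_lt_succ_l (S k)), Hhigh, C_n_0, Nat.sub_0_r; ring.
Qed.

Lemma is_derivs_mult m p f P F : is_derivs m p P -> is_derivs m f F ->
  is_derivs m (fun x => p x * f x) (leibniz P F).
Proof.
  intros [P0 dP] [F0 dF]; split.
  - intros x Hx; unfold leibniz; simpl; rewrite P0, F0, C_n_0 by auto; ring.
  - intros k Hk x Hx; rewrite <- leibniz_succ; unfold leibniz.
    apply (deriv_nonneg_sum_lt (S k) (fun l z => C k l * P l z * F (k - l)%nat z)).
    intros l Hl.
    replace (C k l * (P (S l) x * F (k - l)%nat x + P l x * F (S (k - l)) x))
      with ((0 * P l x + C k l * P (S l) x) * F (k - l)%nat x
            + C k l * P l x * F (S (k - l)) x) by ring.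
    apply (deriv_nonneg_mult (fun z => C k l * P l z) (F (k - l)%nat)).
    + apply (deriv_nonneg_mult (fun _ => C k l) (P l)); [apply deriv_nonneg_const|].
      apply dP; auto; lia.
    + apply dF; auto; lia.
Qed.

Fixpoint falling (a l : nat) : R :=
  match l with O => 1 | S l' => falling a l' * INR (a - l') end.

Definition pow_derivs (a l : nat) (x : R) : R := falling a l * x ^ (a - l).

Definition exp_opp_derivs (l : nat) (x : R) : R := (-1) ^ l * exp (- x).

Lemma is_derivs_pow m a : is_derivs m (fun x => x ^ a) (pow_derivs a).
Proof.
  split; [intros x _; unfold pow_derivs; simpl; rewrite Nat.sub_0_r; ring|].
  intros k _ x _; unfold pow_derivs.
  replace (falling a (S k) * x ^ (a - S k))
    with (0 * x ^ (a - k) + falling a k * (INR (a - k) * x ^ Nat.pred (a - k)))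
    by (simpl; replace (Nat.pred (a - k)) with (a - S k)%nat by lia; ring).
  apply (deriv_nonneg_mult (fun _ => falling a k) (fun z => z ^ (a - k)));
    [apply deriv_nonneg_const|].
  apply deriv_nonneg_of_derivable_pt_lim, derivable_pt_lim_pow.
Qed.

Lemma is_derivs_exp_opp m : is_derivs m (fun x => exp (- x)) exp_opp_derivs.
Proof.
  split; [intros x _; unfold exp_opp_derivs; simpl; ring|].
  intros k _ x _; unfold exp_opp_derivs.
  replace ((-1) ^ S k * exp (- x)) with (0 * exp (- x) + (-1) ^ k * (exp (- x) * - 1))
    by (simpl; ring).
  apply (deriv_nonneg_mult (fun _ => (-1) ^ k) (fun z => exp (- z)));
    [apply deriv_nonneg_const|].
  apply deriv_nonneg_of_derivable_pt_lim.
  apply (derivable_pt_lim_comp (fun z => - z) exp x (- 1)).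
  - apply (derivable_pt_lim_opp id), derivable_pt_lim_id.
  - apply derivable_pt_lim_exp.
Qed.

Lemma falling_gt a l : (a < l)%nat -> falling a l = 0.
Proof.
  induction l; intros Hl; [lia|]; simpl.
  destruct (Nat.eq_dec l a) as [->|Hne]; [rewrite Nat.sub_diag; simpl; ring|].
  rewrite IHl by lia; ring.
Qed.

Lemma falling_fact a l :
  (l <= a)%nat -> falling a l * INR (fact (a - l)) = INR (fact a).
Proof.
  induction l; intros Hl; simpl; [rewrite Nat.sub_0_r; ring|].
  rewrite <- IHl by lia; replace (a - l)%nat with (S (a - S l)) by lia.
  rewrite fact_simpl, mult_INR; ring.
Qed.

Lemma poch_fact k r : poch (INR (k + 1)) r * INR (fact k) = INR (fact (k + r)).
Proof.
  induction r; simpl poch; [rewrite Nat.add_0_r; ring|].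
  replace (k + S r)%nat with (S (k + r)) by lia.
  rewrite fact_simpl, mult_INR, <- IHr, S_INR, !plus_INR; simpl INR; ring.
Qed.

Lemma C_falling_poch n a r : (r <= a)%nat -> (r <= n)%nat ->
  C n r * falling a r = C a (a - r) * poch (INR (n - r + 1)) r.
Proof.
  intros Hra Hrn.
  assert (Hfall : falling a r = INR (fact a) / INR (fact (a - r))).
  { rewrite <- (falling_fact a r) by auto; field; apply INR_fact_neq_0. }
  assert (Hpoch : poch (INR (n - r + 1)) r = INR (fact n) / INR (fact (n - r))).
  { pose proof (poch_fact (n - r) r) as Hp; rewrite Nat.sub_add in Hp by auto.
    rewrite <- Hp; field; apply INR_fact_neq_0. }
  rewrite Hfall, Hpoch; unfold C; replace (a - (a - r))%nat with r by lia.
  field; repeat split; apply INR_fact_neq_0.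
Qed.

Lemma leibniz_exp_opp n F x :
  leibniz exp_opp_derivs F n x
  = exp (- x) * sum_lt (S n) (fun s => C n s * (-1) ^ (n - s) * F s x).
Proof.
  unfold leibniz; rewrite sum_lt_rev, <- sum_lt_mult_l.
  apply sum_lt_ext; intros s Hs.
  replace (S n - 1 - s)%nat with (n - s)%nat by lia.
  replace (n - (n - s))%nat with s by lia.
  rewrite <- pascal_step1 by lia; unfold exp_opp_derivs; ring.
Qed.

Lemma leibniz_pow a n F x : (a <= n)%nat ->
  leibniz (pow_derivs a) F n x
  = sum_lt (S a) (fun j => C a j * poch (INR (n - a + j + 1)) (a - j) * x ^ j
                           * F (n - a + j)%nat x).
Proof.
  intros Han; unfold leibniz.
  rewrite (sum_lt_trunc (S n) (S a)), sum_lt_rev; [|lia|].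
  - apply sum_lt_ext; intros j Hj; unfold pow_derivs.
    replace (S a - 1 - j)%nat with (a - j)%nat by lia.
    rewrite <- Rmult_assoc, (C_falling_poch n a (a - j)) by lia.
    replace (a - (a - j))%nat with j by lia.
    replace (n - (a - j))%nat with (n - a + j)%nat by lia; ring.
  - intros l Hl; unfold pow_derivs; rewrite falling_gt by lia; ring.
Qed.

Lemma neg1_pow_parity p q k : (p + q = 2 * k)%nat -> (-1) ^ p = (-1) ^ q.
Proof.
  intros Hpq; destruct (Nat.le_ge_cases p q).
  - replace q with (p + 2 * (k - p))%nat by lia; rewrite pow_add, pow_1_even; ring.
  - replace p with (q + 2 * (k - q))%nat by lia; rewrite pow_add, pow_1_even; ring.
Qed.

Definition d_summand (alpha i j : nat) (x : R) : R :=
  (-1) ^ (i + j + 1) * C (alpha + 1) (j - 1) * C (alpha + 2) (i - j)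
  * poch (INR (i + 1)) (alpha + 2 - j) * x ^ j.

Lemma scaled_leibniz_double_sum alpha Y x :
  (-1) ^ (alpha + 1) * exp x * x
  * leibniz exp_opp_derivs (fun s => leibniz (pow_derivs (alpha + 1)) Y (alpha + 2 + s))
      (alpha + 2) x
  = sum_range 1 (alpha + 2) (fun j => sum_range 0 (alpha + 2)
      (fun s => d_summand alpha (j + s) j x * Y (j + s)%nat x)).
Proof.
  rewrite leibniz_exp_opp, sum_range_sum_lt.
  replace (S (alpha + 2) - 1)%nat with (S (alpha + 1)) by lia.
  rewrite (sum_lt_ext (S (alpha + 1))
             (fun j => sum_range 0 (alpha + 2)
                         (fun s => d_summand alpha (1 + j + s) (1 + j) x * Y (1 + j + s)%nat x))
             (fun j => sum_lt (S (alpha + 2))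
                         (fun s => d_summand alpha (1 + j + s) (1 + j) x * Y (1 + j + s)%nat x)))
    by (intros; rewrite sum_range_sum_lt, Nat.sub_0_r; reflexivity).
  rewrite sum_lt_swap, <- Rmult_assoc, <- sum_lt_mult_l.
  apply sum_lt_ext; intros s Hs.
  rewrite leibniz_pow by lia; rewrite <- !sum_lt_mult_l.
  apply sum_lt_ext; intros j Hj; unfold d_summand.
  replace (alpha + 2 + s - (alpha + 1) + j)%nat with (1 + j + s)%nat by lia.
  replace (1 + j + s - (1 + j))%nat with s by lia.
  replace (1 + j - 1)%nat with j by lia.
  replace (alpha + 2 - (1 + j))%nat with (alpha + 1 - j)%nat by lia.
  rewrite (neg1_pow_parity (1 + j + s + (1 + j) + 1) (alpha + 1 + (alpha + 2 - s))
             (alpha + j + 3)) by lia.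
  rewrite (pow_add (-1) (alpha + 1)), exp_Ropp; simpl (x ^ (1 + j)).
  field; apply Rgt_not_eq, exp_pos.
Qed.

Lemma scaled_leibniz_d_coef alpha Y x :
  (-1) ^ (alpha + 1) * exp x * x
  * leibniz exp_opp_derivs (fun s => leibniz (pow_derivs (alpha + 1)) Y (alpha + 2 + s))
      (alpha + 2) x
  = sum_range 1 (2 * alpha + 4) (fun i => d_coef alpha i x * Y i x).
Proof.
  rewrite scaled_leibniz_double_sum, sum_range_diagonal.
  replace (alpha + 2 + (alpha + 2))%nat with (2 * alpha + 4)%nat by lia.
  apply sum_range_ext; intros i Hi; unfold d_coef.
  rewrite Nat.sub_add_distr, <- sum_range_mult_r.
  apply sum_range_ext; intros j Hj.
  replace (j + (i - j))%nat with i by lia; reflexivity.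
Qed.

Theorem corollary2p4 (alpha : nat) (y : R -> R) (Y : nat -> R -> R) :
  is_Cn_derivs (2 * alpha + 4) y Y ->
  (exists G, is_derivs (alpha + 2) (fun x => x ^ (alpha + 1) * y x) G) /\
  (forall G, is_derivs (alpha + 2) (fun x => x ^ (alpha + 1) * y x) G ->
     (exists H, is_derivs (alpha + 2) (fun x => exp (- x) * G (alpha + 2)%nat x) H) /\
     (forall H, is_derivs (alpha + 2) (fun x => exp (- x) * G (alpha + 2)%nat x) H ->
        forall x, 0 <= x ->
          (-1) ^ (alpha + 1) * exp x * x * H (alpha + 2)%nat x
          = sum_range 1 (2 * alpha + 4) (fun i => d_coef alpha i x * Y i x))).
Proof.
  intros [hY _].
  set (K := leibniz (pow_derivs (alpha + 1)) Y).
  assert (hK : is_derivs (2 * alpha + 4) (fun x => x ^ (alpha + 1) * y x) K)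
    by (apply is_derivs_mult; [apply is_derivs_pow | exact hY]).
  assert (hK' : is_derivs (alpha + 2) (fun x => x ^ (alpha + 1) * y x) K)
    by (apply (is_derivs_le (2 * alpha + 4)); [lia | exact hK]).
  split; [exists K; exact hK'|].
  intros G hG.
  set (M := leibniz exp_opp_derivs (fun s => K (alpha + 2 + s)%nat)).
  assert (hM : is_derivs (alpha + 2) (fun x => exp (- x) * G (alpha + 2)%nat x) M).
  { apply (is_derivs_ext _ (fun x => exp (- x) * K (alpha + 2)%nat x)).
    - intros z hz; rewrite (is_derivs_unique _ _ _ _ hK' hG); auto.
    - apply is_derivs_mult; [apply is_derivs_exp_opp|].
      replace (alpha + 2)%nat with (2 * alpha + 4 - (alpha + 2))%nat at 1 by lia.
      apply (is_derivs_shift (2 * alpha + 4) (alpha + 2) _ _ ltac:(lia) hK). }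
  split; [exists M; exact hM|].
  intros H hH x hx.
  rewrite (is_derivs_unique _ _ _ _ hH hM) by (auto; lia).
  apply scaled_leibniz_d_coef.
Qed.
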